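(* (i) Let $\rho_{AB}$ be a state on $\mathbb{C}^m\otimes\mathbb{C}^n$, and let $\rho^+_A,\rho^+_B$ be the reduced states of $\rho_{AB}^+$. If $\mathrm{rank}(\rho^+_A)=p$ and $\mathrm{rank}(\rho^+_B)=q$, then $\rho_{AB}$ is a $p\times q$ state, i.e. $\mathrm{rank}(\mathrm{tr}_B\rho_{AB})\le p$ and $\mathrm{rank}(\mathrm{tr}_A\rho_{AB})\le q$. (ii) Let $\rho_{AB}=\sum_{x,y=1}^m|x\rangle\langle y|\otimes\rho_{xy}$ (with $\rho_{xy}\in\mathcal{M}_m(\mathbb{C})$) be a PPT state on $\mathbb{C}^m\otimes\mathbb{C}^m$ whose real part is diagonal, $\rho_{AB}^+=\sum_{j,k=1}^m p_{j,k}|j,k\rangle\langle j,k|$ with all $p_{j,k}\ge0$. Then: (ii.a) If $p_{j,k}=0$, then all entries in the $k$-th rows and $k$-th columns of $\rho_{j1},\dots,\rho_{jm}$ and of $\rho_{1j},\dots,\rho_{mj}$ are zero. (ii.b) If for two distinct $x,y\in\{1,\dots,m\}$ there are distinct $k_1,\dots,k_s$ and distinct $l_1,\dots,l_t$ in $\{1,\dots,m\}$ with $p_{x,k_1}=\dots=p_{x,k_s}=0$ and $p_{y,l_1}=\dots=p_{y,l_t}=0$, then for every $k\in\{k_1,\dots,k_s\}\cup\{l_1,\dots,l_t\}$ the $k$-th row and the $k$-th column of the blocks $\rho_{xy}$ and $\rho_{yx}$ are zero. (ii.c) If $\rho_{AB}^+=\sum_{j=1}^m p_{j,j}|\pi_1(j),\pi_2(j)\rangle\langle\pi_1(j),\pi_2(j)|$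 for permutations $\pi_1,\pi_2$ of $\{1,\dots,m\}$, then $\rho_{AB}=\rho_{AB}^+$, which is separable.
   Context: For a Hermitian $\rho$, $\rho^+=\frac12(\rho+\rho^* )$ is its real part (entrywise complex conjugate $\rho^*$). A state $\rho_{AB}$ is PPT if its partial transpose with respect to subsystem $A$ is positive semidefinite. *)

(* Complex numbers are modelled by an arbitrary
   numClosedFieldType C (e.g. algC, or complex R for R : rcfType). *)
From mathcomp Require Import all_boot all_order all_fingroup all_algebra.
Set Implicit Arguments. Unset Strict Implicit. Unset Printing Implicit Defensive.
Import Order.TTheory GRing.Theory Num.Theory.
Local Open Scope ring_scope.

Section QDefs.
Variable C : numClosedFieldType.

Definition adj (p q : nat) (A : 'M[C]_(p, q)) : 'M[C]_(q, p) := map_mx Num.conj A^T.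

Definition hermitian (d : nat) (A : 'M[C]_d) : Prop := adj A = A.

Definition psd (d : nat) (A : 'M[C]_d) : Prop :=
  hermitian A /\ forall v : 'cV[C]_d, 0 <= (adj v *m A *m v) 0 0.

Definition is_state (d : nat) (A : 'M[C]_d) : Prop := psd A /\ \tr A = 1.

Definition realpart (d : nat) (A : 'M[C]_d) : 'M[C]_d :=
  2^-1 *: (A + map_mx Num.conj A).

(* C^m (x) C^n is 'cV_(m*n); basis vector |i,k> has index mxvec_index i k. *)
(* E rho i k j l = <i,k| rho |j,l>                                          *)
Definition E (m n : nat) (rho : 'M[C]_(m * n)) (i : 'I_m) (k : 'I_n)
  (j : 'I_m) (l : 'I_n) : C := rho (mxvec_index i k) (mxvec_index j l).

(* inverse of mxvec_index *)
Definition unpair (m n : nat) (r : 'I_(m * n)) : 'I_m * 'I_n :=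
  enum_val (cast_ord (esym (mxvec_cast m n)) r).

Definition kron (m n : nat) (A : 'M[C]_m) (B : 'M[C]_n) : 'M[C]_(m * n) :=
  \matrix_(r, c) (A (unpair r).1 (unpair c).1 * B (unpair r).2 (unpair c).2).

Definition trB (m n : nat) (rho : 'M[C]_(m * n)) : 'M[C]_m :=
  \matrix_(i, j) \sum_(k < n) E rho i k j k.
Definition trA (m n : nat) (rho : 'M[C]_(m * n)) : 'M[C]_n :=
  \matrix_(k, l) \sum_(i < m) E rho i k i l.

Definition ptA (m n : nat) (rho : 'M[C]_(m * n)) : 'M[C]_(m * n) :=
  \matrix_(r, c) E rho (unpair c).1 (unpair r).2 (unpair r).1 (unpair c).2.

Definition PPT (m n : nat) (rho : 'M[C]_(m * n)) : Prop := psd (ptA rho).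

Definition separable (m n : nat) (rho : 'M[C]_(m * n)) : Prop :=
  exists (N : nat) (w : 'I_N -> C) (a : 'I_N -> 'cV[C]_m) (b : 'I_N -> 'cV[C]_n),
    (forall t, 0 <= w t) /\
    rho = \sum_(t < N) w t *: kron (a t *m adj (a t)) (b t *m adj (b t)).

End QDefs.

(** (i) Partial traces of a positive semidefinite matrix are positive
    semidefinite, and so is the entrywise conjugate of one.  For positive
    semidefinite [P], [Q] the kernel of [P + Q] lies in that of [P], so
    [rank T <= rank T^+]; and taking the real part commutes with partial
    traces.
    (ii) In a positive semidefinite matrix a zero diagonal entry kills its row
    and column.  Applied to [rho] and to its partial transpose, which has the
    same diagonal, this gives (ii.a) and (ii.b).  For (ii.c) it shows that a
    nonzero entry [<i,k|rho|j,l>] needs nonzero diagonal entries at [(i,k)],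
    [(j,l)] and [(j,k)], which a diagonal supported on the graph of a
    bijection allows only for [(i,k) = (j,l)]; so [rho] is diagonal, hence
    real, and a diagonal state is separable. *)

From Pilot Require Import Defs.
From mathcomp Require Import all_boot all_order all_fingroup all_algebra.
From mathcomp Require Import ring zify.
Set Implicit Arguments. Unset Strict Implicit. Unset Printing Implicit Defensive.
Import Order.TTheory GRing.Theory Num.Theory.
Local Open Scope ring_scope.

Section Adjoint.
Variable C : numClosedFieldType.

Lemma adjE p q (A : 'M[C]_(p, q)) i j : adj A i j = (A j i)^*.
Proof. by rewrite /adj !mxE. Qed.

Lemma adjK p q (A : 'M[C]_(p, q)) : adj (adj A) = A.
Proof. by apply/matrixP => i j; rewrite !adjE conjCK. Qed.

Lemma adjM p q r (A : 'M[C]_(p, q)) (B : 'M[C]_(q, r)) :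
  adj (A *m B) = adj B *m adj A.
Proof. by rewrite /adj trmx_mul map_mxM. Qed.

Lemma adjD p q (A B : 'M[C]_(p, q)) : adj (A + B) = adj A + adj B.
Proof. by rewrite /adj linearD map_mxD. Qed.

Lemma adjZ p q a (A : 'M[C]_(p, q)) : adj (a *: A) = a^* *: adj A.
Proof. by apply/matrixP => i j; rewrite [LHS]adjE [RHS]mxE !adjE mxE rmorphM. Qed.

Lemma adj0 p q : adj (0 : 'M[C]_(p, q)) = 0.
Proof. by rewrite /adj trmx0 map_mx0. Qed.

Lemma adj_delta p q (i : 'I_p) (j : 'I_q) :
  adj (delta_mx i j : 'M[C]_(p, q)) = delta_mx j i.
Proof. by apply/matrixP => a b; rewrite adjE !mxE rmorph_nat andbC. Qed.

Lemma hermitianE d (A : 'M[C]_d) (i j : 'I_d) : Defs.hermitian A -> A i j = (A j i)^*.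
Proof. by move=> hA; rewrite -[in LHS]hA adjE. Qed.

End Adjoint.

Section PositiveSemidefinite.
Variable C : numClosedFieldType.

Definition hform d (A : 'M[C]_d) (u w : 'cV[C]_d) : C := (adj u *m A *m w) 0 0.

Lemma hformC d (A : 'M[C]_d) u w : Defs.hermitian A -> hform A u w = (hform A w u)^*.
Proof. by move=> hA; rewrite /hform -adjE !adjM adjK hA mulmxA. Qed.

Lemma hformDl d (A : 'M[C]_d) u1 u2 w : hform A (u1 + u2) w = hform A u1 w + hform A u2 w.
Proof. by rewrite /hform adjD !mulmxDl mxE. Qed.

Lemma hformDr d (A : 'M[C]_d) u w1 w2 : hform A u (w1 + w2) = hform A u w1 + hform A u w2.
Proof. by rewrite /hform mulmxDr mxE. Qed.

Lemma hformZl d (A : 'M[C]_d) a u w : hform A (a *: u) w = a^* * hform A u w.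
Proof. by rewrite /hform adjZ -!scalemxAl mxE. Qed.

Lemma hformZr d (A : 'M[C]_d) a u w : hform A u (a *: w) = a * hform A u w.
Proof. by rewrite /hform -!scalemxAr mxE. Qed.

Lemma hformDm d (A B : 'M[C]_d) u w : hform (A + B) u w = hform A u w + hform B u w.
Proof. by rewrite /hform mulmxDr mulmxDl mxE. Qed.

Lemma hform_deltal d (A : 'M[C]_d) i w : hform A (delta_mx i 0) w = (A *m w) i 0.
Proof. by rewrite /hform adj_delta -rowE -row_mul mxE. Qed.

Lemma psd_hform_ge0 d (A : 'M[C]_d) v : psd A -> 0 <= hform A v v.
Proof. by case=> _; apply. Qed.

Lemma psd_hform_eq0 d (A : 'M[C]_d) u :
  psd A -> hform A u u = 0 -> forall w, hform A w u = 0.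
Proof.
move=> pA uu0 w; have hA := pA.1.
set a := hform A w u; set ww := hform A w w; set N := `|a| ^+ 2.
have ww_ge0 : 0 <= ww := psd_hform_ge0 w pA.
have N_ge0 : 0 <= N by rewrite exprn_ge0.
have aaN : a * a^* = N by rewrite /N normCK.
set b := - (ww + 1) * a^*.
have bE : b^* = - (ww + 1) * a.
  by rewrite /b rmorphM rmorphN rmorphD rmorph1 /= geC0_conj // conjCK.
(* With [N = |a|^2] the form at [N w + b u] is [- (ww + 2) N^2], so [N = 0]. *)
have := psd_hform_ge0 (N *: w + b *: u) pA.
rewrite !(hformDl, hformDr, hformZl, hformZr) uu0 (hformC u w hA) -/a -/ww.
rewrite geC0_conj // bE /b.
set X := (X in 0 <= X).
have -> : X = - ((ww + 2) * N ^+ 2) - 2%:R * (ww + 1) * N * (a * a^* - N).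
  by rewrite /X; ring.
rewrite aaN subrr mulr0 subr0 oppr_ge0 pmulr_rle0 ?ltr_wpDl //.
move=> N2_le0; have /eqP : N ^+ 2 = 0 by apply/le_anti; rewrite N2_le0 exprn_ge0.
by rewrite !expf_eq0 /= normr_eq0 => /eqP.
Qed.

Lemma psd_mulmx_eq0 d (A : 'M[C]_d) v : psd A -> hform A v v = 0 -> A *m v = 0.
Proof.
move=> pA vv0; apply/matrixP => i j; rewrite (ord1 j) -hform_deltal mxE.
exact: psd_hform_eq0.
Qed.

Lemma psd_diag_ge0 d (A : 'M[C]_d) i : psd A -> 0 <= A i i.
Proof.
by move=> pA; have := psd_hform_ge0 (delta_mx i 0) pA; rewrite hform_deltal -colE mxE.
Qed.

Lemma psd_diag_eq0 d (A : 'M[C]_d) i :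
  psd A -> A i i = 0 -> forall j, A i j = 0 /\ A j i = 0.
Proof.
move=> pA Aii0 j.
have Aei0 : A *m (delta_mx i 0 : 'cV_d) = 0.
  by apply: psd_mulmx_eq0; rewrite // hform_deltal -colE mxE.
have Aji0 : A j i = 0 by move/matrixP/(_ j 0): Aei0; rewrite -colE !mxE.
by rewrite (hermitianE _ _ pA.1) Aji0 rmorph0.
Qed.

Lemma psd0 d : psd (0 : 'M[C]_d).
Proof. by split=> [|v]; rewrite ?/Defs.hermitian ?adj0 // mulmx0 mul0mx mxE. Qed.

Lemma psdD d (A B : 'M[C]_d) : psd A -> psd B -> psd (A + B).
Proof.
move=> pA pB; split; first by rewrite /Defs.hermitian adjD pA.1 pB.1.
by move=> v; rewrite -/(hform _ v v) hformDm addr_ge0 ?psd_hform_ge0.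
Qed.

Lemma psd_sum d I (r : seq I) (P : pred I) (F : I -> 'M[C]_d) :
  (forall i, P i -> psd (F i)) -> psd (\sum_(i <- r | P i) F i).
Proof. by move=> pF; elim/big_ind: _ => //; [apply: psd0 | apply: psdD]. Qed.

Lemma psd_congr N d (A : 'M[C]_N) (X : 'M[C]_(N, d)) : psd A -> psd (adj X *m A *m X).
Proof.
move=> [hA pA]; split; first by rewrite /Defs.hermitian !adjM adjK hA mulmxA.
by move=> v; have := pA (X *m v); rewrite adjM !mulmxA.
Qed.

Lemma psd_reindex N d (A : 'M[C]_N) (f : 'I_d -> 'I_N) :
  psd A -> psd (\matrix_(i, j) A (f i) (f j)).
Proof.
pose S : 'M[C]_(N, d) := \matrix_(r, i) (r == f i)%:R.
suff -> : \matrix_(i, j) A (f i) (f j) = adj S *m A *m S by apply: psd_congr.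
have pick (F : 'I_N -> C) r : \sum_c F c * (c == r)%:R = F r.
  by rewrite (bigD1 r) //= eqxx mulr1 big1 ?addr0 // => c /negPf->; rewrite mulr0.
apply/matrixP => i j; rewrite !mxE.
under eq_bigr => c _ do rewrite !mxE.
rewrite pick; under eq_bigr => r _ do rewrite adjE mxE rmorph_nat mulrC.
by rewrite pick.
Qed.

Lemma psd_conj d (A : 'M[C]_d) : psd A -> psd (map_mx Num.conj A).
Proof.
move=> [hA pA]; split.
  by apply/matrixP => i j; rewrite adjE !mxE -[in RHS]hA adjE.
move=> v; have := pA (map_mx Num.conj v).
have -> : adj v *m map_mx Num.conj A *m v =
          map_mx Num.conj (adj (map_mx Num.conj v) *m A *m map_mx Num.conj v).
  rewrite !map_mxM; congr (_ *m _ *m _); apply/matrixP => i j.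
    by rewrite [LHS]adjE [RHS]mxE [X in _ = X^*]adjE !mxE conjCK.
  by rewrite !mxE /= conjCK.
by move=> ge0; rewrite mxE geC0_conj.
Qed.

Lemma psd_addr_mulmx_eq0 d (P Q : 'M[C]_d) (v : 'cV[C]_d) :
  psd P -> psd Q -> (P + Q) *m v = 0 -> P *m v = 0.
Proof.
move=> pP pQ PQv0; apply: psd_mulmx_eq0 => //.
have : hform (P + Q) v v = 0 by rewrite /hform -mulmxA PQv0 mulmx0 mxE.
rewrite hformDm => /eqP; rewrite paddr_eq0 ?psd_hform_ge0 //.
by case/andP=> /eqP.
Qed.

Lemma mxrank_psdD d (P Q : 'M[C]_d) :
  psd P -> psd Q -> (\rank P <= \rank (P + Q)%R)%N.
Proof.
move=> pP pQ.
have sub_ker : (kermx (P + Q)%R <= kermx P)%MS.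
  apply/sub_kermxP/row_matrixP => i; rewrite row_mul row0.
  set u := row i (kermx (P + Q)).
  have uPQ0 : u *m (P + Q) = 0 by rewrite /u -row_mul mulmx_ker row0.
  have PQu0 : (P + Q) *m adj u = 0 by rewrite -(psdD pP pQ).1 -adjM uPQ0 adj0.
  by rewrite -[u]adjK -pP.1 -adjM (psd_addr_mulmx_eq0 pP pQ PQu0) adj0.
have := mxrankS sub_ker; rewrite !mxrank_ker.
have := rank_leq_row P; have := rank_leq_row (P + Q); lia.
Qed.

End PositiveSemidefinite.

Section RealPart.
Variable C : numClosedFieldType.

Lemma realpartE d (A : 'M[C]_d) r c : realpart A r c = 2^-1 * (A r c + (A r c)^*).
Proof. by rewrite /realpart !mxE. Qed.

Lemma realpart_diag d (A : 'M[C]_d) r : Defs.hermitian A -> realpart A r r = A r r.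
Proof.
move=> hA; rewrite realpartE -(hermitianE _ _ hA).
by rewrite -mulr2n -(mulr_natl (A r r)) mulrA mulVf ?mul1r // pnatr_eq0.
Qed.

Lemma realpart_id d (A : 'M[C]_d) :
  Defs.hermitian A -> (forall r s, r != s -> A r s = 0) -> realpart A = A.
Proof.
move=> hA A_diag; apply/matrixP => r s; have [<-|r_neq_s] := eqVneq r s.
  exact: realpart_diag.
by rewrite realpartE A_diag // rmorph0 addr0 mulr0.
Qed.

Lemma mxrank_realpart d (T : 'M[C]_d) : psd T -> (\rank T <= \rank (realpart T))%N.
Proof.
move=> pT; rewrite /realpart mxrank_scale_nz ?invr_eq0 ?pnatr_eq0 //.
exact/mxrank_psdD/psd_conj.
Qed.

Lemma trB_realpart m n (rho : 'M[C]_(m * n)) : trB (realpart rho) = realpart (trB rho).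
Proof.
apply/matrixP => i j; rewrite realpartE !mxE rmorph_sum -big_split mulr_sumr.
by apply: eq_bigr => k _; rewrite /E realpartE.
Qed.

Lemma trA_realpart m n (rho : 'M[C]_(m * n)) : trA (realpart rho) = realpart (trA rho).
Proof.
apply/matrixP => k l; rewrite realpartE !mxE rmorph_sum -big_split mulr_sumr.
by apply: eq_bigr => i _; rewrite /E realpartE.
Qed.

End RealPart.

Section Bipartite.
Variable C : numClosedFieldType.

Lemma unpairK m n (i : 'I_m) (k : 'I_n) : unpair (mxvec_index i k) = (i, k).
Proof. by rewrite /unpair /mxvec_index cast_ordK enum_rankK. Qed.

Lemma mxvec_index_inj m n (i j : 'I_m) (k l : 'I_n) :
  mxvec_index i k = mxvec_index j l -> i = j /\ k = l.
Proof. by move=> /(congr1 (@unpair m n)); rewrite !unpairK => -[-> ->]. Qed.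

Lemma mxvec_index_eqE m n (i j : 'I_m) (k l : 'I_n) :
  (mxvec_index i k == mxvec_index j l) = (i == j) && (k == l).
Proof. by apply/eqP/andP => [/mxvec_index_inj[-> ->]|[/eqP-> /eqP->]]. Qed.

Lemma ptAE m n (rho : 'M[C]_(m * n)) i k j l :
  ptA rho (mxvec_index i k) (mxvec_index j l) = E rho j k i l.
Proof. by rewrite /ptA mxE !unpairK. Qed.

Lemma psd_trB m n (rho : 'M[C]_(m * n)) : psd rho -> psd (trB rho).
Proof.
move=> prho.
have -> : trB rho = \sum_k \matrix_(i, j) rho (mxvec_index i k) (mxvec_index j k).
  by apply/matrixP => i j; rewrite !mxE summxE; apply: eq_bigr => k _; rewrite mxE.
by apply: psd_sum => k _; apply: psd_reindex.
Qed.

Lemma psd_trA m n (rho : 'M[C]_(m * n)) : psd rho -> psd (trA rho).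
Proof.
move=> prho.
have -> : trA rho = \sum_i \matrix_(k, l) rho (mxvec_index i k) (mxvec_index i l).
  by apply/matrixP => k l; rewrite !mxE summxE; apply: eq_bigr => i _; rewrite mxE.
by apply: psd_sum => i _; apply: psd_reindex.
Qed.

Lemma ppt_diag_eq0 m n (rho : 'M[C]_(m * n)) j k :
  psd rho -> PPT rho -> E rho j k j k = 0 ->
  forall x l, [/\ E rho j k x l = 0, E rho j l x k = 0,
                  E rho x k j l = 0 & E rho x l j k = 0].
Proof.
move=> prho pptA rho_jk0 x l.
have [rho_row0 rho_col0] := psd_diag_eq0 prho rho_jk0 (mxvec_index x l).
have ptA_jk0 : ptA rho (mxvec_index j k) (mxvec_index j k) = 0 by rewrite ptAE.
have [ptA_row0 ptA_col0] := psd_diag_eq0 pptA ptA_jk0 (mxvec_index x l).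
by rewrite !ptAE in ptA_row0 ptA_col0.
Qed.

Lemma ppt_entry_neq0 m n (rho : 'M[C]_(m * n)) i k j l :
  psd rho -> PPT rho -> E rho i k j l != 0 ->
  [/\ E rho i k i k != 0, E rho j l j l != 0 & E rho j k j k != 0].
Proof.
move=> prho pptA rho_ikjl; split; apply: contra rho_ikjl => /eqP rho_diag0.
- by have [-> _ _ _] := ppt_diag_eq0 prho pptA rho_diag0 j l.
- by have [_ _ _ ->] := ppt_diag_eq0 prho pptA rho_diag0 i k.
- by have [_ _ -> _] := ppt_diag_eq0 prho pptA rho_diag0 i l.
Qed.

(* [(j, k)] shares its first coordinate with [(j, l)] and its second one with
   [(i, k)], so a support meeting each row and each column at most once
   forces [(i, k) = (j, l)]. *)
Lemma ppt_graph_support_diag m n N (rho : 'M[C]_(m * n))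
    (f : 'I_N -> 'I_m) (g : 'I_N -> 'I_n) :
  psd rho -> PPT rho -> injective f -> injective g ->
  (forall i k, E rho i k i k != 0 -> exists t, i = f t /\ k = g t) ->
  forall r c, r != c -> rho r c = 0.
Proof.
move=> prho pptA inj_f inj_g supp r c.
case/mxvec_indexP: r => i k; case/mxvec_indexP: c => j l.
rewrite mxvec_index_eqE; apply: contraNeq => rho_ikjl.
have [/supp[t [-> ->]] /supp[u [-> ->]] /supp[w [fwu gwt]]] :=
  ppt_entry_neq0 prho pptA rho_ikjl.
by rewrite (inj_f _ _ fwu) (inj_g _ _ gwt) !eqxx.
Qed.

Lemma kron_delta m n (r : 'I_(m * n)) :
  kron (delta_mx (unpair r).1 (unpair r).1 : 'M[C]_m)
       (delta_mx (unpair r).2 (unpair r).2) = delta_mx r r.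
Proof.
apply/matrixP => r' c'; rewrite /kron !mxE.
case/mxvec_indexP: r => a b; case/mxvec_indexP: r' => i k; case/mxvec_indexP: c' => j l.
rewrite !unpairK /= !mxvec_index_eqE -natrM mulnb.
by case: (i == a); case: (j == a); case: (k == b); case: (l == b).
Qed.

Lemma diag_separable m n (R : 'M[C]_(m * n)) :
  (forall r c, r != c -> R r c = 0) -> (forall r, 0 <= R r r) -> separable R.
Proof.
move=> R_diag R_ge0.
exists (m * n)%N, (fun r => R r r), (fun r => delta_mx (unpair r).1 0),
  (fun r => delta_mx (unpair r).2 0); split=> //.
apply/matrixP => r c; rewrite summxE.
under eq_bigr => t _ do rewrite !adj_delta !mul_delta_mx kron_delta !mxE.
have [<-|r_neq_c] := eqVneq r c.
  rewrite (bigD1 r) //= eqxx mulr1 big1 ?addr0 // => t /negPf t_neq_r.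
  by rewrite eq_sym t_neq_r mulr0.
rewrite R_diag // big1 // => t _.
by case: eqP => [<-|_]; rewrite ?(eq_sym c) ?(negPf r_neq_c) mulr0.
Qed.

Lemma sum_delta_diag_support d N (c : 'I_N -> C) (f : 'I_N -> 'I_d) r :
  (\sum_t c t *: delta_mx (f t) (f t)) r r != 0 -> exists t, r = f t.
Proof.
have [t /eqP r_ft _|no_t] := pickP (fun t => r == f t); first by exists t.
by rewrite summxE big1 ?eqxx // => t _; rewrite !mxE no_t mulr0.
Qed.

Lemma ppt_perm_support_separable m (rho : 'M[C]_(m * m))
    (pi1 pi2 : 'S_m) (c : 'I_m -> C) :
  psd rho -> PPT rho ->
  realpart rho = \sum_t c t *:
    delta_mx (mxvec_index (pi1 t) (pi2 t)) (mxvec_index (pi1 t) (pi2 t)) ->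
  rho = realpart rho /\ separable (realpart rho).
Proof.
move=> prho pptA rho_re.
have rho_diag : forall r s, r != s -> rho r s = 0.
  apply: (ppt_graph_support_diag prho pptA (@perm_inj _ pi1) (@perm_inj _ pi2)).
  move=> i k; rewrite /E -realpart_diag ?rho_re; last exact: prho.1.
  by case/sum_delta_diag_support => t /mxvec_index_inj; exists t.
have rho_real : realpart rho = rho by apply: realpart_id; [exact: prho.1|].
split=> //; rewrite rho_real.
by apply: diag_separable => // r; apply: psd_diag_ge0.
Qed.

End Bipartite.

Theorem lemma6 (C : numClosedFieldType) :
  (* (i) *)
  (forall (m n p q : nat) (rho : 'M[C]_(m * n)),
     is_state rho ->
     \rank (trB (realpart rho)) = p ->
     \rank (trA (realpart rho)) = q ->
     (\rank (trB rho) <= p)%N /\ (\rank (trA rho) <= q)%N)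
  /\
  (* (ii) *)
  (forall (m : nat) (rho : 'M[C]_(m * m)) (p : 'I_m -> 'I_m -> C),
     is_state rho -> PPT rho ->
     (forall i k j l, E (realpart rho) i k j l =
                      if (i == j) && (k == l) then p i k else 0) ->
     (forall j k, 0 <= p j k) ->
     (* (ii.a) *)
     (forall j k : 'I_m, p j k = 0 ->
        forall x l : 'I_m,
          [/\ E rho j k x l = 0, E rho j l x k = 0,
              E rho x k j l = 0 & E rho x l j k = 0])
     /\
     (* (ii.b) *)
     (forall (x y : 'I_m) (K L : {set 'I_m}), x != y ->
        (forall k, k \in K -> p x k = 0) ->
        (forall l, l \in L -> p y l = 0) ->
        forall k, k \in K :|: L -> forall l : 'I_m,
          [/\ E rho x k y l = 0, E rho x l y k = 0,
              E rho y k x l = 0 & E rho y l x k = 0])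
     /\
     (* (ii.c) *)
     (forall (pi1 pi2 : 'S_m) (c : 'I_m -> C),
        realpart rho = \sum_(t < m) c t *:
          delta_mx (mxvec_index (pi1 t) (pi2 t)) (mxvec_index (pi1 t) (pi2 t)) ->
        rho = realpart rho /\ separable (realpart rho))).
Proof.
split=> [m n p q rho [prho _] <- <-|m rho p [prho _] pptA rho_re _].
  rewrite trB_realpart trA_realpart.
  by split; apply: mxrank_realpart; [apply: psd_trB | apply: psd_trA].
have part_a (j k : 'I_m) : p j k = 0 -> forall x l,
    [/\ E rho j k x l = 0, E rho j l x k = 0, E rho x k j l = 0 & E rho x l j k = 0].
  move=> pjk0; apply: ppt_diag_eq0 => //.
  rewrite /E -realpart_diag; last exact: prho.1.
  by have := rho_re j k j k; rewrite !eqxx pjk0.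
split=> //; split; last by move=> pi1 pi2 c; apply: ppt_perm_support_separable.
move=> x y K L _ pxK pyL k; rewrite in_setU => /orP[kK|kL] l.
  by have [] := part_a _ _ (pxK k kK) y l.
by have [] := part_a _ _ (pyL k kL) x l.
Qed.
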